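(* Let $K$ be a field of characteristic $p>0$ such that $K/K^{p^\infty}$ is a finitely generated field extension, where $K^{p^\infty}=\bigcap_{n\ge0}K^{p^n}$. Let $W_1$ be a subfield with $K^p\subseteq W_1\subsetneq K$. Then there exists a subfield $W_2\subseteq W_1$ such that $K,W_1,W_2$ is a $2$-foliation on $K$, i.e. $K^{p^2}\subseteq W_2$, $W_2\cdot K^p=W_1$, and $\dim_{W_2}(W_1)=\dim_{W_1}(K)$.
   Context: $\cdot$ denotes the compositum of subfields inside $K$. *)

(* Subfields of an arbitrary (possibly infinite-dimensional) field K
   are represented as predicates K -> Prop closed under the field operations. *)
From mathcomp Require Import all_boot all_order all_algebra.
Set Implicit Arguments. Unset Strict Implicit. Unset Printing Implicit Defensive.
Import GRing.Theory.
Local Open Scope ring_scope.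

Section Subfields.
Variable K : fieldType.

Definition is_subfield (S : K -> Prop) : Prop :=
  [/\ S 0, S 1,
      (forall x y, S x -> S y -> S (x - y)),
      (forall x y, S x -> S y -> S (x * y)) &
      (forall x, S x -> S x^-1)].

Definition subset_of (A B : K -> Prop) : Prop := forall x, A x -> B x.

Definition pow_image (q : nat) : K -> Prop := fun x => exists y : K, x = y ^+ q.

Definition perfect_core (p : nat) : K -> Prop :=
  fun x => forall n : nat, pow_image (p ^ n) x.

Definition gen_field (A : K -> Prop) : K -> Prop :=
  fun x => forall S, is_subfield S -> subset_of A S -> S x.

Definition compositum (A B : K -> Prop) : K -> Prop :=
  gen_field (fun x => A x \/ B x).

Definition fin_gen_over (F : K -> Prop) : Prop :=
  exists s : seq K, forall x : K, gen_field (fun y => F y \/ y \in s) x.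

Definition lin_comb (A : K -> Prop) (s : seq K) (x : K) : Prop :=
  exists c : seq K, [/\ size c = size s, (forall i, A (c`_i)) &
      x = \sum_(i < size s) c`_i * s`_i].

Definition lin_indep (A : K -> Prop) (s : seq K) : Prop :=
  forall c : seq K, size c = size s -> (forall i, A (c`_i)) ->
    \sum_(i < size s) c`_i * s`_i = 0 -> forall i, (i < size s)%N -> c`_i = 0.

Definition is_basis (A B : K -> Prop) (s : seq K) : Prop :=
  [/\ (forall x, x \in s -> B x), lin_indep A s & (forall x, B x -> lin_comb A s x)].

Definition ext_deg (A B : K -> Prop) (n : nat) : Prop :=
  exists s : seq K, size s = n /\ is_basis A B s.

(* dim_A(B) = dim_C(D) as elements of nat ∪ {infinity}:
   for each n, one is n iff the other is n (both infinite otherwise) *)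
Definition same_deg (A B C D : K -> Prop) : Prop :=
  forall n : nat, ext_deg A B n <-> ext_deg C D n.

End Subfields.

From HB Require Import structures.
From mathcomp Require Import all_boot all_order all_algebra.
From mathcomp Require Import ring.
From Stdlib Require Import Classical ClassicalEpsilon.
Set Implicit Arguments. Unset Strict Implicit. Unset Printing Implicit Defensive.
Import GRing.Theory.
Local Open Scope ring_scope.

(* Write P = K^p, so that K^(p^oo) ⊆ P ⊆ W1 and K = P(s) for a finite s. Adjoining
   the elements of s one at a time and skipping those already present gives a p-basis:
   K = W1(z_1, ..., z_r) where the monomials z^a (0 <= a_i < p) form a W1-basis, since
   1, x, ..., x^(p-1) are free over L whenever x^p ∈ L but x ∉ L. Projecting a finite
   P-spanning set of K onto the coordinate of the monomial 1 shows that W1 is finitely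
   spanned over P, so in the same way W1 = P(y) with the monomials y^b a P-basis.
   Take W2 = W1^p(y). Then K^(p^2) ⊆ W1^p ⊆ W2 ⊆ W1 and W2·P = P(y) = W1. Frobenius
   carries the W1-basis z^a of K to a W1^p-basis of P; combined with the P-basis y^b
   of W1, which spans W2 over W1^p, this shows that the p-th powers of the z^a form a
   W2-basis of W1, so [W1 : W2] = [K : W1]. *)

Section Subfields.
Variable K : fieldType.
Implicit Types (A B L M S : K -> Prop) (s t b c : seq K).

Lemma subf0 S : is_subfield S -> S 0. Proof. by case. Qed.
Lemma subf1 S : is_subfield S -> S 1. Proof. by case. Qed.
Lemma subfB S x y : is_subfield S -> S x -> S y -> S (x - y).
Proof. by case=> _ _ h _ _; apply: h. Qed.
Lemma subfM S x y : is_subfield S -> S x -> S y -> S (x * y).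
Proof. by case=> _ _ _ h _; apply: h. Qed.
Lemma subfV S x : is_subfield S -> S x -> S x^-1.
Proof. by case=> _ _ _ _ h; apply: h. Qed.

Lemma subfN S x : is_subfield S -> S x -> S (- x).
Proof. by move=> hS hx; rewrite -sub0r; apply: subfB => //; apply: subf0. Qed.

Lemma subfD S x y : is_subfield S -> S x -> S y -> S (x + y).
Proof. by move=> hS hx hy; rewrite -[y]opprK; apply: subfB => //; apply: subfN. Qed.

Lemma subfX S x n : is_subfield S -> S x -> S (x ^+ n).
Proof.
move=> hS hx; elim: n => [|n IH]; first by rewrite expr0; apply: subf1.
by rewrite exprS; apply: subfM.
Qed.

Lemma subfn S n : is_subfield S -> S n%:R.
Proof.
move=> hS; elim: n => [|n IH]; first exact: subf0.
by rewrite -addn1 natrD; apply: subfD => //; apply: subf1.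
Qed.

Lemma subf_sum S (I : Type) (r : seq I) (P : pred I) (F : I -> K) :
  is_subfield S -> (forall i, P i -> S (F i)) -> S (\sum_(i <- r | P i) F i).
Proof. by move=> hS hF; apply: (big_ind S) => //; [apply: subf0 | move=> *; apply: subfD]. Qed.

Lemma subfieldT : is_subfield (fun _ : K => True). Proof. by []. Qed.

Lemma gen_field_subfield A : is_subfield (gen_field A).
Proof.
split=> [S hS _|S hS _|x y hx hy S hS hA|x y hx hy S hS hA|x hx S hS hA].
- exact: subf0.
- exact: subf1.
- by apply: subfB => //; [apply: hx | apply: hy].
- by apply: subfM => //; [apply: hx | apply: hy].
- by apply: subfV => //; apply: hx.
Qed.

Lemma sub_gen_field A : subset_of A (gen_field A).
Proof. by move=> x hx S _ hA; apply: hA. Qed.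

Lemma gen_field_min A S : is_subfield S -> subset_of A S -> subset_of (gen_field A) S.
Proof. by move=> hS hA x hx; apply: hx. Qed.

Lemma gen_field_mono A B : subset_of A B -> subset_of (gen_field A) (gen_field B).
Proof.
move=> hAB; apply: gen_field_min; first exact: gen_field_subfield.
by move=> x /hAB; apply: sub_gen_field.
Qed.

(* Recursive counterparts of [lin_comb] and [lin_indep], suited to induction on the list. *)
Inductive lspan A : seq K -> K -> Prop :=
| lspan_nil : lspan A [::] 0
| lspan_cons a x s y : A a -> lspan A s y -> lspan A (x :: s) (a * x + y).

Fixpoint lfree A s : Prop :=
  if s is x :: s' then
    lfree A s' /\ (forall a y, A a -> lspan A s' y -> a * x + y = 0 -> a = 0)
  else True.

Definition add_closed A := A 0 /\ (forall u v, A u -> A v -> A (u + v)).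

Lemma subf_add_closed S : is_subfield S -> add_closed S.
Proof. by move=> hS; split; [apply: subf0 | move=> *; apply: subfD]. Qed.

Lemma lspan_consE A s a x y z : A a -> lspan A s y -> z = a * x + y -> lspan A (x :: s) z.
Proof. by move=> ha hy ->; constructor. Qed.

Lemma lspan_consP A x s z :
  lspan A (x :: s) z -> exists a y, [/\ A a, lspan A s y & z = a * x + y].
Proof. by move=> h; inversion h; subst; exists a, y. Qed.

Lemma lspan0 A s : A 0 -> lspan A s 0.
Proof.
move=> h0; elim: s => [|x s IH]; first by constructor.
by apply: (lspan_consE (a := 0)) IH _ => //; rewrite mul0r addr0.
Qed.

Lemma lspan_consl A x s y : A 0 -> lspan A s y -> lspan A (x :: s) y.
Proof. by move=> h0 h; apply: (lspan_consE (a := 0)) h _ => //; rewrite mul0r add0r. Qed.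

Lemma lspanD A s x y : add_closed A -> lspan A s x -> lspan A s y -> lspan A s (x + y).
Proof.
move=> [h0 hD] hx; elim: hx y => [|a z s' x' ha hx' IH] y hy; first by rewrite add0r.
have [b [y' [hb hy' ->]]] := lspan_consP hy.
by apply: lspan_consE (IH _ hy') _; [apply: hD ha hb | rewrite mulrDl; ring].
Qed.

Lemma lspanZ S s (c : K) x : is_subfield S -> S c -> lspan S s x -> lspan S s (c * x).
Proof.
move=> hS hc; elim=> [|a z s' y ha hy IH]; first by rewrite mulr0; constructor.
by rewrite mulrDr mulrA; constructor => //; apply: subfM.
Qed.

Lemma lspanB S s x y : is_subfield S -> lspan S s x -> lspan S s y -> lspan S s (x - y).
Proof.
move=> hS hx hy; apply: lspanD hx _; first exact: subf_add_closed.
by rewrite -mulN1r; apply: lspanZ hy => //; apply: subfN => //; apply: subf1.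
Qed.

Lemma lspan_mem A s x : A 0 -> A 1 -> x \in s -> lspan A s x.
Proof.
move=> h0 h1; elim: s => // y s IH; rewrite inE => /orP[/eqP->|hx].
  by apply: (lspan_consE (a := 1)) (lspan0 _ h0) _ => //; rewrite mul1r addr0.
exact: lspan_consl (IH hx).
Qed.

Lemma lspan_sub A S s : is_subfield S -> subset_of A S -> (forall y, y \in s -> S y) ->
  subset_of (lspan A s) S.
Proof.
move=> hS hA hs x hx; elim: hx hs => [|a z s' y ha hy IH] hs; first exact: subf0.
apply: subfD => //; last by apply: IH => w hw; apply: hs; rewrite inE hw orbT.
by apply: subfM => //; [apply: hA | apply: hs; rewrite inE eqxx].
Qed.

Lemma lspan_mono A B s : subset_of A B -> subset_of (lspan A s) (lspan B s).
Proof. by move=> h x; elim=> *; constructor => //; apply: h. Qed.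

Lemma lspan1 S y : is_subfield S -> lspan S [:: 1] y <-> S y.
Proof.
move=> hS; split; last by move=> hy; apply: (lspan_consE (a := y)) (lspan_nil _) _ => //; rewrite mulr1 addr0.
by case/lspan_consP => a [y' [ha hy' ->]]; inversion hy'; rewrite mulr1 addr0.
Qed.

Lemma lspan_cat A s1 s2 x : A 0 ->
  lspan A (s1 ++ s2) x <-> exists x1 x2, [/\ lspan A s1 x1, lspan A s2 x2 & x = x1 + x2].
Proof.
move=> h0; split.
  elim: s1 x => [|z s1 IH] x /= h.
    by exists 0, x; split => //; [constructor | rewrite add0r].
  have [a [y [ha /IH [x1 [x2 [h1 h2 ->]]] ->]]] := lspan_consP h.
  by exists (a * z + x1), x2; split => //; [constructor | rewrite addrA].
case=> x1 [x2 [h1 h2 ->]]; elim: h1 => [|a z s y ha hy IH] /=; first by rewrite add0r.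
by rewrite -addrA; constructor.
Qed.

Lemma lspan_mulr A s m x :
  lspan A [seq u * m | u <- s] x <-> exists2 y, lspan A s y & x = y * m.
Proof.
split.
  elim: s x => [|z s IH] x /= h.
    by inversion h; exists 0; [constructor | rewrite mul0r].
  have [a [y [ha /IH [y' hy' ->] ->]]] := lspan_consP h.
  by exists (a * z + y'); [constructor | rewrite mulrDl mulrA].
case=> y hy ->; elim: hy => [|a z s' y' ha hy IH] /=; first by rewrite mul0r; constructor.
by rewrite mulrDl -mulrA; constructor.
Qed.

Lemma lfree_cat A s1 s2 : A 0 -> lfree A s1 -> lfree A s2 ->
  (forall x1 x2, lspan A s1 x1 -> lspan A s2 x2 -> x1 + x2 = 0 -> x1 = 0) ->
  lfree A (s1 ++ s2).
Proof.
move=> h0; elim: s1 => [|z s1 IH] //= [hi1 hz] hi2 hdis; split.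
  by apply: IH => // x1 x2 h1; apply: hdis (lspan_consl _ h0 h1).
move=> a y ha /(lspan_cat _ _ _ h0) [y1 [y2 [h1 h2 ->]]] e.
by apply: (hz _ y1) => //; apply: (hdis _ y2) => //; [constructor | rewrite -addrA].
Qed.

Lemma lfree_mulr A s m : m != 0 -> lfree A s -> lfree A [seq x * m | x <- s].
Proof.
move=> hm; elim: s => [|z s IH] //= [hi hz]; split; first exact: IH.
move=> a y ha /lspan_mulr [y' hy' ->] /eqP.
by rewrite mulrA -mulrDl mulf_eq0 (negPf hm) orbF => /eqP; apply: hz.
Qed.

Lemma lfree_head_neq0 S x s : is_subfield S -> lfree S (x :: s) -> x != 0.
Proof.
move=> hS [_ hx]; apply/eqP => x0.
have := hx 1 0 (subf1 hS) (lspan0 _ (subf0 hS)); rewrite x0 mulr0 addr0.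
by move=> /(_ erefl) /eqP; rewrite oner_eq0.
Qed.

Definition prodseq b c : seq K := flatten [seq [seq bi * cj | bi <- b] | cj <- c].

Lemma prodseq_cons b (c0 : K) c : prodseq b (c0 :: c) = [seq bi * c0 | bi <- b] ++ prodseq b c.
Proof. by []. Qed.

Lemma lspan_prodseq L M b c y : is_subfield L -> (forall m, M m -> lspan L b m) ->
  lspan M c y -> lspan L (prodseq b c) y.
Proof.
move=> hL hMb; elim=> [|a z s y' ha hy IH]; first by constructor.
rewrite prodseq_cons; apply/lspan_cat; first exact: subf0.
by exists (a * z), y'; split => //; apply/lspan_mulr; exists a => //; apply: hMb.
Qed.

Lemma lspan_prodseqW L M b c y : is_subfield L -> is_subfield M -> subset_of L M ->
  (forall x, x \in b -> M x) -> lspan L (prodseq b c) y -> lspan M c y.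
Proof.
move=> hL hM hLM hb; elim: c y => [|c0 c IH] y /=; first by move=> h; inversion h; constructor.
rewrite prodseq_cons => /(lspan_cat _ _ _ (subf0 hL)) [y1 [y2 [/lspan_mulr [u hu ->] /IH h2 ->]]].
by apply: lspan_consE h2 _ => //; apply: lspan_sub hu.
Qed.

Lemma lfree_prodseq L M b c : is_subfield L -> is_subfield M -> subset_of L M ->
  (forall x, x \in b -> M x) -> lfree L b -> lfree M c -> lfree L (prodseq b c).
Proof.
move=> hL hM hLM hb hib; elim: c => [|c0 c IH] //= hc; have [hic hc0] := hc.
rewrite prodseq_cons; apply: lfree_cat; first exact: subf0.
- exact: lfree_mulr (lfree_head_neq0 hM hc) hib.
- exact: IH.
move=> x1 x2 /lspan_mulr [u hu ->] /(lspan_prodseqW hL hM hLM hb) h2 e.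
by rewrite (hc0 u x2 (lspan_sub hM hLM hb hu) h2 e) mul0r.
Qed.

Lemma lspan_add_closed A s : add_closed A -> add_closed (lspan A s).
Proof. by move=> hA; split; [apply: lspan0; case: hA | move=> u v; apply: lspanD]. Qed.

Lemma lspan_prodseq_swap L M b c x : is_subfield L -> (forall m, M m -> lspan L b m) ->
  lspan M c x -> lspan (lspan L c) b x.
Proof.
move=> hL hMb; have hL0 := subf0 hL.
elim=> [|a z s x' ha hx IH]; first by apply/lspan0/lspan0.
apply: lspanD; first exact/lspan_add_closed/subf_add_closed.
  elim: (hMb _ ha) => [|l b0 b' a' hl ha' IHa]; first by rewrite mul0r; apply/lspan0/lspan0.
  rewrite mulrDl -mulrA [b0 * z]mulrC mulrA; apply: lspan_consE IHa _ => //.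
  by apply: (lspan_consE (a := l)) (lspan0 _ hL0) _ => //; rewrite addr0.
by apply: lspan_mono IH => y; apply: lspan_consl.
Qed.

Lemma big_nth_cons (a : K) c x s :
  \sum_(i < size (x :: s)) (a :: c)`_i * (x :: s)`_i = a * x + \sum_(i < size s) c`_i * s`_i.
Proof. by rewrite big_ord_recl. Qed.

Lemma lspan_lin_comb A s x : A 0 -> lspan A s x -> lin_comb A s x.
Proof.
move=> h0; elim=> [|a z s' y ha hy [c [hs hc ->]]].
  by exists [::]; split => //; [case | rewrite big_ord0].
by exists (a :: c); split; [rewrite /= hs | case | rewrite big_nth_cons].
Qed.

Lemma lin_comb_lspan A s x : lin_comb A s x -> lspan A s x.
Proof.
elim: s x => [|z s IH] x [c [hs hc ->]]; first by rewrite big_ord0; constructor.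
case: c hs hc => // a c [hs] hc; rewrite big_nth_cons.
by constructor; [apply: (hc 0%N) | apply: IH; exists c; split => // i; apply: (hc i.+1)].
Qed.

Lemma lfree_lin_indep A s : A 0 -> lfree A s -> lin_indep A s.
Proof.
move=> h0; elim: s => [|z s IH]; first by move=> _ c _ _ _ [].
move=> [hi hz] [//|a c] [hs] hc; rewrite big_nth_cons => e.
have hsp : lspan A s (\sum_(i < size s) c`_i * s`_i).
  by apply: lin_comb_lspan; exists c; split => // i; apply: (hc i.+1).
have a0 := hz a _ (hc 0%N) hsp e.
move: e; rewrite a0 mul0r add0r => e [|i] //=.
by rewrite ltnS; apply: (IH hi) => // j; apply: (hc j.+1).
Qed.

Lemma lin_indep_lfree A s : A 0 -> lin_indep A s -> lfree A s.
Proof.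
move=> h0; elim: s => [|z s IH] //= hl; split.
  apply: IH => c hs hc e i.
  apply: (hl (0 :: c) _ _ _ i.+1); [by rewrite /= hs | by case | by rewrite big_nth_cons mul0r add0r].
move=> a y ha /(lspan_lin_comb h0) [c [hs hc ->]] e.
by apply: (hl (a :: c) _ _ _ 0%N) => //; [rewrite /= hs | case | rewrite big_nth_cons].
Qed.

Lemma lfree_basis A B s : A 0 -> (forall x, x \in s -> B x) ->
  lfree A s -> (forall x, B x -> lspan A s x) -> is_basis A B s.
Proof.
move=> h0 hsB hfree hspan; split => //; first exact: lfree_lin_indep.
by move=> x /hspan; apply: lspan_lin_comb.
Qed.

End Subfields.

Section Dimension.
Variable K : fieldType.
Implicit Types (A B L M : K -> Prop) (s t b c : seq K).

Lemma bounded_choice (T : Type) (d : T) (P : nat -> T -> Prop) n :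
  (forall i, (i < n)%N -> exists v, P i v) ->
  exists f : nat -> T, forall i, (i < n)%N -> P i (f i).
Proof.
elim: n => [|n IH] h; first by exists (fun _ => d).
have [f hf] := IH (fun i hi => h i (ltnW hi)).
have [v hv] := h n (ltnSn n).
exists (fun i => if i == n then v else f i) => i; rewrite ltnS leq_eqVlt.
by case: eqP => [->|_] //= /hf.
Qed.

Lemma sum_delta n i (F : nat -> K) : (i < n)%N ->
  \sum_(k < n) (((k : nat) == i)%:R * F k) = F i.
Proof.
move=> hi; rewrite (bigD1 (Ordinal hi)) //= eqxx mul1r big1 ?addr0 // => k hk.
suff /negPf -> : (k : nat) != i by rewrite mul0r.
by apply: contra hk => /eqP e; apply/eqP; apply: val_inj.
Qed.

Lemma lin_combP A s x : lin_comb A s x ->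
  exists f : nat -> K, (forall j, A (f j)) /\ x = \sum_(j < size s) f j * s`_j.
Proof. by case=> c [_ hc ->]; exists (fun j => c`_j). Qed.

Lemma lin_indepP A s (f : nat -> K) : A 0 -> lin_indep A s ->
  (forall j, (j < size s)%N -> A (f j)) -> \sum_(j < size s) f j * s`_j = 0 ->
  forall j, (j < size s)%N -> f j = 0.
Proof.
move=> h0 hi hf e j hj.
have := hi (mkseq f (size s)) (size_mkseq _ _) _ _ j hj; rewrite nth_mkseq //; apply.
  move=> i; case: (ltnP i (size s)) => hi'; first by rewrite nth_mkseq //; apply: hf.
  by rewrite nth_default // size_mkseq.
by rewrite -[RHS]e; apply: eq_bigr => i _; rewrite nth_mkseq.
Qed.

Lemma lin_indep_tower L M b c (e : nat -> nat -> K) : is_subfield L -> is_subfield M ->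
  subset_of L M -> (forall x, x \in b -> M x) -> lin_indep L b -> lin_indep M c ->
  (forall i j, L (e i j)) ->
  \sum_(i < size b) (\sum_(j < size c) e i j * c`_j) * b`_i = 0 ->
  forall i j, (i < size b)%N -> (j < size c)%N -> e i j = 0.
Proof.
move=> hL hM hLM hb hib hic he E i j hi hj.
have Ec : \sum_(j < size c) (\sum_(i < size b) e i j * b`_i) * c`_j = 0.
  rewrite -[RHS]E; under eq_bigr do rewrite mulr_suml.
  rewrite exchange_big /=; apply: eq_bigr => i' _; rewrite mulr_suml.
  by apply: eq_bigr => j' _; rewrite -!mulrA [c`_ _ * _]mulrC.
have Ej : \sum_(i < size b) e i j * b`_i = 0.
  apply: (lin_indepP (f := fun j => \sum_(i < size b) e i j * b`_i) (subf0 hM) hic _ Ec hj).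
  move=> j' _.
  apply: subf_sum => // i' _; apply: subfM => //; first exact: hLM.
  case: (ltnP i' (size b)) => h; first by apply: hb; apply: mem_nth.
  by rewrite nth_default //; apply: subf0.
exact: (lin_indepP (f := fun i => e i j) (subf0 hL) hib (fun i _ => he i j) Ej).
Qed.

(* Writing each vector of one basis in the other gives matrices with [Mx *m Nx = 1]. *)
Lemma basis_size A B s t : is_subfield A -> is_basis A B s -> is_basis A B t ->
  (size t <= size s)%N.
Proof.
move=> hA [hsB hsi hsc] [htB hti htc].
have [Mf hM] := bounded_choice (fun _ => 0) (P := fun i (f : nat -> K) =>
  (forall j, A (f j)) /\ t`_i = \sum_(j < size s) f j * s`_j) (n := size t)
  (fun i hi => lin_combP (hsc _ (htB _ (mem_nth 0 hi)))).
have [Nf hN] := bounded_choice (fun _ => 0) (P := fun j (f : nat -> K) =>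
  (forall k, A (f k)) /\ s`_j = \sum_(k < size t) f k * t`_k) (n := size s)
  (fun j hj => lin_combP (htc _ (hsB _ (mem_nth 0 hj)))).
pose Mx : 'M[K]_(size t, size s) := \matrix_(i, j) Mf i j.
pose Nx : 'M[K]_(size s, size t) := \matrix_(j, k) Nf j k.
apply: (@mulmx1_min _ _ _ Mx Nx); apply/matrixP => i k; rewrite !mxE.
have [hMi eMi] := hM i (ltn_ord i).
pose g k' := \sum_(j < size s) Mf i j * Nf j k' - ((k' == i)%:R).
have hg k' : (k' < size t)%N -> A (g k').
  move=> _; apply: subfB => //; last exact: subfn.
  by apply: subf_sum => // j _; apply: subfM => //; case: (hN j (ltn_ord j)).
have eg : \sum_(k' < size t) g k' * t`_k' = 0.
  rewrite /g; under eq_bigr do rewrite mulrBl.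
  rewrite sumrB sum_delta // eMi; apply/eqP; rewrite subr_eq0; apply/eqP.
  under eq_bigr do rewrite mulr_suml.
  rewrite exchange_big /=; apply: eq_bigr => j _.
  have [_ ->] := hN j (ltn_ord j).
  by rewrite mulr_sumr; apply: eq_bigr => k' _; rewrite mulrA.
move: (lin_indepP (subf0 hA) hti hg eg (ltn_ord k)); rewrite /g => /eqP.
rewrite subr_eq0 => /eqP E; have -> : (i == k) = ((k : nat) == i) by rewrite eq_sym.
rewrite -E.
by apply: eq_bigr => j _; rewrite !mxE.
Qed.

Lemma ext_deg_basis A B s n : is_subfield A -> is_basis A B s ->
  (ext_deg A B n <-> n = size s).
Proof.
move=> hA hb; split; last by move=> ->; exists s.
by case=> t [<- ht]; apply/eqP; rewrite eqn_leq (basis_size hA hb ht) (basis_size hA ht hb).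
Qed.

End Dimension.

Section Frobenius.
Variables (K : fieldType) (p : nat).
Hypothesis hp : p \in [pchar K].
Implicit Types (A L S : K -> Prop) (s t : seq K).

Lemma pchar_gt0 : (0 < p)%N. Proof. exact/prime_gt0/(pcharf_prime hp). Qed.
Lemma pchar_gt1 : (1 < p)%N. Proof. exact/prime_gt1/(pcharf_prime hp). Qed.

Lemma frobD (x y : K) : (x + y) ^+ p = x ^+ p + y ^+ p.
Proof. exact: (pFrobenius_autD_comm hp (mulrC x y)). Qed.

Lemma frobB (x y : K) : (x - y) ^+ p = x ^+ p - y ^+ p.
Proof. exact: (pFrobenius_autB_comm hp (mulrC x y)). Qed.

Lemma frob0 : (0 : K) ^+ p = 0.
Proof. by rewrite expr0n gtn_eqF // pchar_gt0. Qed.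

Lemma frob_inj : injective (fun x : K => x ^+ p).
Proof.
move=> x y /= e; apply/eqP; rewrite -subr_eq0.
have : (x - y) ^+ p == 0 by rewrite frobB e subrr.
by rewrite expf_eq0 => /andP[].
Qed.

Lemma pow_image_subfield : is_subfield (pow_image (K := K) p).
Proof.
split.
- by exists 0; rewrite frob0.
- by exists 1; rewrite expr1n.
- by move=> _ _ [a ->] [b ->]; exists (a - b); rewrite frobB.
- by move=> _ _ [a ->] [b ->]; exists (a * b); rewrite exprMn.
- by move=> _ [a ->]; exists a^-1; rewrite exprVn.
Qed.

Definition frob_image A : K -> Prop := fun x => exists2 a, A a & x = a ^+ p.

Lemma frob_image_subfield S : is_subfield S -> is_subfield (frob_image S).
Proof.
move=> hS; split.
- by exists 0; [apply: subf0 | rewrite frob0].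
- by exists 1; [apply: subf1 | rewrite expr1n].
- by move=> _ _ [a ha ->] [b hb ->]; exists (a - b); [apply: subfB | rewrite frobB].
- by move=> _ _ [a ha ->] [b hb ->]; exists (a * b); [apply: subfM | rewrite exprMn].
- by move=> _ [a ha ->]; exists a^-1; [apply: subfV | rewrite exprVn].
Qed.

Definition frobs s := [seq x ^+ p | x <- s].

Lemma lspan_frob A s x : lspan A s x -> lspan (frob_image A) (frobs s) (x ^+ p).
Proof.
elim=> [|a z s' y ha hy IH] /=; first by rewrite frob0; constructor.
by rewrite frobD exprMn; constructor => //; exists a.
Qed.

Lemma lspan_frobP A s y : A 0 ->
  lspan (frob_image A) (frobs s) y -> exists2 x, lspan A s x & y = x ^+ p.
Proof.
move=> h0; elim: s y => [|z s IH] y /= h; first by inversion h; exists 0; [constructor | rewrite frob0].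
have [_ [y' [[a ha ->] /IH [x hx ->] ->]]] := lspan_consP h.
by exists (a * z + x); [constructor | rewrite frobD exprMn].
Qed.

Lemma lfree_frob A s : A 0 -> lfree A s -> lfree (frob_image A) (frobs s).
Proof.
move=> h0; elim: s => [|z s IH] //= [hi hz]; split; first exact: IH.
move=> _ y [a ha ->] /(lspan_frobP h0) [x hx ->] e.
have e' : (a * z + x) ^+ p = 0 ^+ p by rewrite frob0 frobD exprMn.
by rewrite (hz a x ha hx (frob_inj e')) frob0.
Qed.

Definition powers (x : K) : seq K := mkseq (fun i => x ^+ i) p.

(* [adjoin L x] is [L(x)] when [x ^+ p] lies in [L]. *)
Definition adjoin L x : K -> Prop := lspan L (powers x).

Lemma mem_powers_1 x : 1 \in powers x.
Proof. by apply/mapP; exists 0%N; rewrite ?mem_iota ?add0n ?pchar_gt0. Qed.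

Lemma mem_powers_x x : x \in powers x.
Proof. by apply/mapP; exists 1%N; rewrite ?mem_iota ?add0n ?pchar_gt1 ?expr1. Qed.

Lemma mem_powersP x m : m \in powers x -> exists2 i, (i < p)%N & m = x ^+ i.
Proof. by case/mapP => i; rewrite mem_iota add0n => hi ->; exists i. Qed.

Lemma lspan_mull S s t w y : is_subfield S ->
  (forall m, m \in s -> lspan S t (w * m)) -> lspan S s y -> lspan S t (w * y).
Proof.
move=> hS hw h; elim: h hw => [|a z s' y' ha hy IH] hw.
  by rewrite mulr0; apply: lspan0; apply: subf0.
rewrite mulrDr; apply: lspanD; first exact: subf_add_closed.
  by rewrite mulrCA; apply: lspanZ => //; apply: hw; rewrite inE eqxx.
by apply: IH => m hm; apply: hw; rewrite inE hm orbT.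
Qed.

Section Adjoin.
Variables (L : K -> Prop) (x : K).
Hypotheses (hL : is_subfield L) (hxp : L (x ^+ p)).

Lemma adjoin_powers m : m \in powers x -> adjoin L x m.
Proof. by apply: lspan_mem; [apply: subf0 | apply: subf1]. Qed.

Lemma adjoin_ext : subset_of L (adjoin L x).
Proof. by move=> a ha; rewrite -[a]mulr1; apply: lspanZ (adjoin_powers (mem_powers_1 x)). Qed.

Lemma adjoin_gen : adjoin L x x.
Proof. exact: adjoin_powers (mem_powers_x x). Qed.

Lemma adjoin_mulX i y : adjoin L x y -> adjoin L x (x ^+ i * y).
Proof.
move=> hy; elim: i => [|i IH]; first by rewrite mul1r.
rewrite exprS -mulrA; move: IH; apply: lspan_mull => // m /mem_powersP [j hj ->].
rewrite -exprS; have [hj1|] := ltnP j.+1 p.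
  by apply: adjoin_powers; apply/mapP; exists j.+1; rewrite ?mem_iota.
by move=> pj; rewrite (_ : j.+1 = p) ?mulr1; [apply: adjoin_ext | apply/eqP; rewrite eqn_leq hj].
Qed.

Lemma adjoin_mul y z : adjoin L x y -> adjoin L x z -> adjoin L x (y * z).
Proof.
move=> hy hz; rewrite mulrC; apply: (lspan_mull (s := powers x)) hy => //.
by move=> m /mem_powersP [i _ ->]; rewrite mulrC; apply: adjoin_mulX.
Qed.

Lemma adjoin_frob y : adjoin L x y -> L (y ^+ p).
Proof.
have hs m : m \in powers x -> L (m ^+ p).
  by case/mem_powersP => i _ ->; rewrite exprAC; apply: subfX.
move=> h; elim: h hs => [|a z s y' ha hy IH] hs; first by rewrite frob0; apply: subf0.
rewrite frobD exprMn; apply: subfD => //.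
  by apply: subfM => //; [apply: subfX | apply: hs; rewrite inE eqxx].
by apply: IH => m hm; apply: hs; rewrite inE hm orbT.
Qed.

Lemma adjoin_subfield : is_subfield (adjoin L x).
Proof.
have hX y i : adjoin L x y -> adjoin L x (y ^+ i).
  move=> hy; elim: i => [|i IH]; last by rewrite exprS; apply: adjoin_mul.
  by rewrite expr0; apply: adjoin_ext; apply: subf1.
have h0 : adjoin L x 0 by apply: lspan0; apply: subf0.
split=> //; [by apply: adjoin_ext; apply: subf1 | by move=> *; apply: lspanB | exact: adjoin_mul |].
move=> y hy; have [->|y0] := eqVneq y 0; first by rewrite invr0.
have -> : y^-1 = y ^+ p.-1 * (y ^+ p)^-1.
  by rewrite -(prednK pchar_gt0) exprS /= invfM mulrCA mulfV ?mulr1 // expf_neq0.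
by apply: adjoin_mul; [apply: hX | apply: adjoin_ext; apply: subfV => //; apply: adjoin_frob].
Qed.

Lemma adjoin_min S : is_subfield S -> subset_of L S -> S x -> subset_of (adjoin L x) S.
Proof.
move=> hS hLS hx; apply: lspan_sub => // m /mem_powersP [i _ ->].
exact: subfX.
Qed.

End Adjoin.
End Frobenius.

Section SubfieldType.
Variables (K : fieldType) (L : K -> Prop).
Hypothesis hL : is_subfield L.

(* The subfield [L] as a [fieldType], so that polynomials over [L] are available. Membership is decided classically; the unused argument [is_subfield L] lets the canonical ring structures below find [hL]. *)
Definition in_subfield of is_subfield L : pred K :=
  fun y => if excluded_middle_informative (L y) then true else false.

Lemma in_subfieldP y : in_subfield hL y <-> L y.
Proof. by rewrite /in_subfield; case: excluded_middle_informative. Qed.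

Lemma in_subfield_divring_closed : GRing.divring_closed (in_subfield hL).
Proof.
split.
- by apply/in_subfieldP; apply: subf1.
- by move=> u v /in_subfieldP hu /in_subfieldP hv; apply/in_subfieldP; apply: subfB.
- move=> u v /in_subfieldP hu /in_subfieldP hv; apply/in_subfieldP.
  by apply: subfM => //; apply: subfV.
Qed.

HB.instance Definition _ :=
  GRing.isDivringClosed.Build K (in_subfield hL) in_subfield_divring_closed.

Record subfield_type := SubfieldElem { sfval :> K; sfvalP : in_subfield hL sfval }.
HB.instance Definition _ := [isSub for sfval].
HB.instance Definition _ := [Choice of subfield_type by <:].
HB.instance Definition _ := [SubChoice_isSubIntegralDomain of subfield_type by <:].
HB.instance Definition _ := [SubIntegralDomain_isSubField of subfield_type by <:].

Lemma sfval_is_zmod_morphism : zmod_morphism sfval. Proof. by []. Qed.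
Lemma sfval_is_monoid_morphism : monoid_morphism sfval. Proof. by []. Qed.
HB.instance Definition _ :=
  GRing.isZmodMorphism.Build subfield_type K sfval sfval_is_zmod_morphism.
HB.instance Definition _ :=
  GRing.isMonoidMorphism.Build subfield_type K sfval sfval_is_monoid_morphism.

Lemma sfval_in (u : subfield_type) : L (sfval u).
Proof. exact/in_subfieldP/sfvalP. Qed.

Definition subfield_elem (y : K) : subfield_type := insubd 1 y.

Lemma subfield_elemK y : L y -> sfval (subfield_elem y) = y.
Proof. by move=> /in_subfieldP hy; rewrite /subfield_elem val_insubd hy. Qed.

End SubfieldType.

Section PurelyInseparable.
Variables (K : fieldType) (p : nat).
Hypothesis hp : p \in [pchar K].
Variables (L : K -> Prop) (x : K).
Hypotheses (hL : is_subfield L) (hxp : L (x ^+ p)) (hx : ~ L x).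

Local Notation LT := (subfield_type hL).
Local Notation val_poly := (map_poly (@sfval _ _ hL)).

(* A polynomial [f] over [L] of degree [< p] vanishing at [x] shares a factor [(X - x)^k], 0 < k < p, with [X^p - x^p = (X - x)^p]; the subleading coefficient [- k x] of that factor lies in [L], whence [x] does. *)
Lemma lin_indep_powers : lin_indep L (powers p x).
Proof.
move=> c hs hc e.
have sp : size (powers p x) = p by rewrite size_mkseq.
pose f : {poly LT} := \poly_(i < p) subfield_elem hL c`_i.
suff f0 : f = 0.
  move=> i hi; have := congr1 (fun q : {poly LT} => sfval (q`_i)) f0.
  by rewrite coef_poly -sp hi subfield_elemK // coef0.
apply/eqP; apply: contraT => fn0.
have mfE : val_poly f = \poly_(i < p) c`_i.
  apply/polyP => i; rewrite coef_map !coef_poly.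
  by case: ifP => // _; apply: subfield_elemK.
have rootf : root (val_poly f) x.
  rewrite mfE /root horner_poly; apply/eqP; move: e; rewrite sp => e; rewrite -[RHS]e.
  by apply: eq_bigr => i _; rewrite nth_mkseq.
pose g : {poly LT} := 'X^p - (subfield_elem hL (x ^+ p))%:P.
have mgE : val_poly g = ('X - x%:P) ^+ p.
  have hpP : p \in [pchar {poly K}] by rewrite pchar_poly.
  rewrite rmorphB /= map_polyXn map_polyC /= subfield_elemK //.
  have := pFrobenius_autB_comm hpP (commr_sym (commr_polyX x%:P)).
  by rewrite !pFrobenius_autE => ->; rewrite polyC_exp.
pose h := gcdp f g.
have mhE : val_poly h = gcdp (val_poly f) (('X - x%:P) ^+ p) by rewrite gcdp_map mgE.
have : val_poly h %| ('X - x%:P) ^+ p by rewrite mhE dvdp_gcdr.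
case/dvdp_exp_XsubCP => k hk hhk.
have kp : (k < p)%N.
  have mf0 : val_poly f != 0 by rewrite map_poly_eq0.
  have hdvf : val_poly h %| val_poly f by rewrite mhE dvdp_gcdl.
  have := dvdp_leq mf0 hdvf; rewrite (eqp_size hhk) size_exp_XsubC => hkf.
  by apply: leq_trans hkf _; rewrite mfE; apply: size_poly.
have k0 : (0 < k)%N.
  have : ('X - x%:P) %| val_poly h.
    rewrite mhE dvdp_gcd dvdp_XsubCl rootf /=.
    by apply/dvdp_exp_XsubCP; exists 1%N; [exact: pchar_gt0 hp | rewrite expr1 eqpxx].
  by rewrite (eqp_dvdr _ hhk); case: (k) => //; rewrite expr0 dvdp1 size_XsubC.
have h0 : h != 0.
  apply: contraTneq hhk => ->; rewrite rmorph0 eqp_sym eqp0 expf_neq0 //.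
  by rewrite polyXsubC_eq0.
pose h1 := (lead_coef h)^-1 *: h.
have mh1 : val_poly h1 = ('X - x%:P) ^+ k.
  have h1m : h1 \is monic by rewrite monicE lead_coefZ mulVf // lead_coef_eq0.
  apply/eqP; rewrite -eqp_monic ?map_monic ?monic_exp ?monicXsubC //.
  apply: eqp_trans hhk; rewrite map_polyZ eqp_scale //.
  by rewrite fmorph_eq0 invr_eq0 lead_coef_eq0.
have := @coefPn_prod_XsubC _ (nseq k x).
rewrite size_nseq !big_nseq iter_mulr_1 iter_addr_0 -mh1 coef_map -lt0n => /(_ k0) e1.
have Lkx : L (x *+ k) by rewrite -[x *+ k]opprK -e1; apply: subfN => //; apply: sfval_in.
have kn0 : (k%:R : K) != 0 by rewrite -(dvdn_pcharf hp) gtnNdvd.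
case: hx; rewrite -[x](mulfK kn0) mulr_natr.
by apply: subfM => //; apply: subfV => //; apply: subfn.
Qed.

Lemma lfree_powers : lfree L (powers p x).
Proof. exact: lin_indep_lfree (subf0 hL) lin_indep_powers. Qed.

End PurelyInseparable.

Section Tower.
Variables (K : fieldType) (p : nat).
Hypothesis hp : p \in [pchar K].
Implicit Types (L M S : K -> Prop) (s t : seq K).

Fixpoint adjoin_seq L t : K -> Prop :=
  if t is x :: t' then adjoin_seq (adjoin p L x) t' else L.

Fixpoint monomials t : seq K :=
  if t is x :: t' then prodseq (powers p x) (monomials t') else [:: 1].

Fixpoint p_indep L t : Prop :=
  if t is x :: t' then ~ L x /\ p_indep (adjoin p L x) t' else True.

Lemma adjoin_cons_pow L x t : is_subfield L -> (forall u, u \in x :: t -> L (u ^+ p)) ->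
  is_subfield (adjoin p L x) /\ forall u, u \in t -> adjoin p L x (u ^+ p).
Proof.
move=> hL hpow; have hx : L (x ^+ p) by apply: hpow; rewrite inE eqxx.
split; first exact: adjoin_subfield.
by move=> u hu; apply: adjoin_ext => //; apply: hpow; rewrite inE hu orbT.
Qed.

Lemma adjoin_seq_subfield L t : is_subfield L -> (forall u, u \in t -> L (u ^+ p)) ->
  is_subfield (adjoin_seq L t).
Proof.
elim: t L => [|x t' IH] L hL hpow //=.
by have [hA hApow] := adjoin_cons_pow hL hpow; apply: IH.
Qed.

Lemma adjoin_seq_ext L t : is_subfield L -> (forall u, u \in t -> L (u ^+ p)) ->
  subset_of L (adjoin_seq L t).
Proof.
elim: t L => [|x t' IH] L hL hpow //= y hy.
have [hA hApow] := adjoin_cons_pow hL hpow; apply: IH => //.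
by apply: adjoin_ext => //; apply: hpow; rewrite inE eqxx.
Qed.

Lemma adjoin_seq_gen L t : is_subfield L -> (forall u, u \in t -> L (u ^+ p)) ->
  forall y, y \in t -> adjoin_seq L t y.
Proof.
elim: t L => [|x t' IH] L hL hpow //= y; have [hA hApow] := adjoin_cons_pow hL hpow.
rewrite inE => /orP[/eqP->|]; last exact: IH.
by apply: adjoin_seq_ext => //; apply: adjoin_gen.
Qed.

Lemma adjoin_seq_min L S t : is_subfield S -> subset_of L S -> (forall y, y \in t -> S y) ->
  subset_of (adjoin_seq L t) S.
Proof.
elim: t L => [|x t' IH] L hS hLS ht //=.
apply: IH => // [|y hy]; last by apply: ht; rewrite inE hy orbT.
by apply: adjoin_min => //; apply: ht; rewrite inE eqxx.
Qed.

Lemma adjoin_seq_lspan L t : is_subfield L -> (forall u, u \in t -> L (u ^+ p)) ->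
  forall y, adjoin_seq L t y <-> lspan L (monomials t) y.
Proof.
elim: t L => [|x t' IH] L hL hpow y /=; first by rewrite lspan1.
have [hA hApow] := adjoin_cons_pow hL hpow; rewrite IH //; split.
  by apply: lspan_prodseq.
apply: lspan_prodseqW => //; first exact: adjoin_ext.
exact: adjoin_powers.
Qed.

Lemma lfree_monomials L t : is_subfield L -> (forall u, u \in t -> L (u ^+ p)) ->
  p_indep L t -> lfree L (monomials t).
Proof.
elim: t L => [|x t' IH] L hL hpow /=.
  by move=> _; split => // a y ha hy; inversion hy; rewrite mulr1 addr0.
have hx : L (x ^+ p) by apply: hpow; rewrite inE eqxx.
move=> [hnx hi]; have [hA hApow] := adjoin_cons_pow hL hpow.
apply: (lfree_prodseq (M := adjoin p L x)) => //.
- exact: adjoin_ext.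
- exact: adjoin_powers.
- exact: lfree_powers.
- exact: IH.
Qed.

Lemma monomials_head t : exists Z, monomials t = 1 :: Z.
Proof.
elim: t => [|x t' [Z IH]] /=; first by exists [::].
rewrite IH prodseq_cons /powers /mkseq -(prednK (pchar_gt0 hp)) /=.
by eexists; rewrite expr0 mulr1.
Qed.

Lemma exists_p_indep L s : is_subfield L -> (forall y, L (y ^+ p)) ->
  exists t, [/\ p_indep L t, {subset t <= s} & forall y, y \in s -> adjoin_seq L t y].
Proof.
elim: s L => [|z s IH] L hL hpow; first by exists [::].
have [hz|hz] := classic (L z).
  have [t [hi hts hs]] := IH L hL hpow.
  exists t; split => // [y /hts|y]; first by rewrite inE => ->; rewrite orbT.
  rewrite inE => /orP[/eqP->|]; last exact: hs.
  by apply: adjoin_seq_ext => // u _.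
have hA := adjoin_subfield hp hL (hpow z).
have hApow y : adjoin p L z (y ^+ p) by apply: adjoin_ext.
have [t [hi hts hs]] := IH _ hA hApow.
exists (z :: t); split => // [y|y].
  by rewrite !inE => /orP[-> //|/hts ->]; rewrite orbT.
rewrite inE => /orP[/eqP->|]; last exact: hs.
by apply: (adjoin_seq_ext (L := adjoin p L z)) => //; apply: adjoin_gen.
Qed.

Lemma p_basis L M s : is_subfield L -> is_subfield M -> subset_of L M ->
  (forall y, L (y ^+ p)) -> (forall u, u \in s -> M u) ->
  (forall x, M x -> gen_field (fun y => L y \/ y \in s) x) ->
  exists t, [/\ forall u, u \in t -> M u, lfree L (monomials t) &
              forall x, M x <-> lspan L (monomials t) x].
Proof.
move=> hL hM hLM hpow hsM hMgen.
have [t [hi hts hs]] := exists_p_indep s hL hpow.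
have tpow u : u \in t -> L (u ^+ p) by move=> _; apply: hpow.
exists t; split => [u /hts /hsM //||x]; first exact: lfree_monomials.
rewrite -adjoin_seq_lspan //; split.
  move=> /hMgen; apply: gen_field_min; first exact: adjoin_seq_subfield.
  by move=> y [/adjoin_seq_ext|/hs]; apply.
by apply: adjoin_seq_min => // u /hts /hsM.
Qed.

End Tower.

(* The coordinate along [1] in the [W]-basis [1 :: Z] is [P]-linear and fixes [W], so it maps a finite [P]-spanning list of [K] onto one of [W]. *)
Lemma intermediate_finite_span (K : fieldType) (P W : K -> Prop) Z m :
  is_subfield P -> is_subfield W -> subset_of P W ->
  lfree W (1 :: Z) -> (forall x, lspan W (1 :: Z) x) -> (forall x, lspan P m x) ->
  exists g, (forall w, w \in g -> W w) /\ forall x, W x -> lspan P g x.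
Proof.
move=> hP hW hPW [_ free1] span1 spanm.
pose coord x w := W w /\ exists2 y, lspan W Z y & x = w + y.
have coord_ex x : exists w, coord x w.
  have [a [y [ha hy ->]]] := lspan_consP (span1 x).
  by exists a; split => //; exists y; rewrite ?mulr1.
have coord_uniq x w w' : coord x w -> coord x w' -> w = w'.
  move=> [hw [y hy ->]] [hw' [y' hy' e]].
  apply/eqP; rewrite -subr_eq0; apply/eqP; apply: (free1 _ (y - y')).
  - exact: subfB.
  - exact: lspanB.
  - by rewrite mulr1 addrACA -opprD e subrr.
have coord_id w : W w -> coord w w.
  by move=> hw; split => //; exists 0; [apply: lspan0; apply: subf0 | rewrite addr0].
have [g [gW hg]] : exists g, (forall w, w \in g -> W w) /\
    forall x, lspan P m x -> exists2 w, coord x w & lspan P g w.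
  elim: m {spanm} => [|m0 m [g [gW hg]]].
    exists [::]; split => // x hx; inversion hx.
    by exists 0; [apply: coord_id; apply: subf0 | constructor].
  have [w0 [hw0 [y0 hy0 e0]]] := coord_ex m0.
  exists (w0 :: g); split; first by move=> w; rewrite inE => /orP[/eqP-> //|/gW].
  move=> x' /lspan_consP [a [x [ha /hg [w [hw [y hy ->]] hwg] ->]]].
  exists (a * w0 + w); last by constructor.
  split; first by apply: subfD => //; apply: subfM => //; apply: hPW.
  exists (a * y0 + y); last by rewrite e0; ring.
  apply: lspanD hy; first exact: subf_add_closed.
  by apply: lspanZ => //; apply: hPW.
exists g; split => // x hx; have [w hw hwg] := hg x (spanm x).
by rewrite (coord_uniq _ _ _ (coord_id _ hx) hw).
Qed.

Section Foliation.
Variables (K : fieldType) (p : nat).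
Hypothesis hp : p \in [pchar K].
Variables (W1 : K -> Prop) (y : seq K).
Hypotheses (hW1 : is_subfield W1) (hpW1 : forall x : K, W1 (x ^+ p)).
Hypothesis yW1 : forall u, u \in y -> W1 u.
Local Notation P := (pow_image (K := K) p).
Local Notation F := (frob_image p W1).
Hypotheses (y_free : lfree P (monomials p y))
           (y_span : forall x, W1 x <-> lspan P (monomials p y) x).

Definition leaf2 : K -> Prop := adjoin_seq p F y.

Let hF : is_subfield F := frob_image_subfield hp hW1.

Let ypow u : u \in y -> F (u ^+ p).
Proof. by move=> hu; exists u => //; apply: yW1. Qed.

Let FP : subset_of F P.
Proof. by move=> _ [a _ ->]; exists a. Qed.

Lemma leaf2_subfield : is_subfield leaf2.
Proof. exact: (adjoin_seq_subfield (t := y) hp hF ypow). Qed.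

Lemma leaf2_sub : subset_of leaf2 W1.
Proof. by apply: adjoin_seq_min => // _ [a _ ->]. Qed.

Lemma leaf2_lspan x : leaf2 x <-> lspan F (monomials p y) x.
Proof. exact: adjoin_seq_lspan. Qed.

Lemma pow_image_leaf2 : subset_of (pow_image (p ^ 2)) leaf2.
Proof.
move=> _ [u ->]; apply: adjoin_seq_ext => //.
by exists (u ^+ p); rewrite // -exprM mulnn.
Qed.

Lemma compositum_leaf2 x : compositum leaf2 P x <-> W1 x.
Proof.
have hC := gen_field_subfield (fun x => leaf2 x \/ P x).
split.
  by apply: gen_field_min => // u [/leaf2_sub // | [v ->]]; apply: hpW1.
have hP := pow_image_subfield hp.
move=> /y_span /(adjoin_seq_lspan hp hP (fun u _ => ex_intro _ u erefl)).
apply: adjoin_seq_min => // u hu; apply: sub_gen_field; first by right.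
by left; apply: adjoin_seq_gen.
Qed.

Section Basis.
Variable Z : seq K.
Hypotheses (Z_free : lfree W1 Z) (Z_span : forall x, lspan W1 Z x).

Let BP u : u \in frobs p Z -> P u.
Proof. by case/mapP => v _ ->; exists v. Qed.

Lemma lin_indep_leaf2_frobs : lin_indep leaf2 (frobs p Z).
Proof.
set B := frobs p Z; set Y := monomials p y.
have B_indep : lin_indep F B := lfree_lin_indep (subf0 hF) (lfree_frob hp (subf0 hW1) Z_free).
have Y_indep : lin_indep P Y := lfree_lin_indep (subf0 (pow_image_subfield hp)) y_free.
move=> c hszc hc e.
have [l hl] := bounded_choice (fun _ => 0) (P := fun i (f : nat -> K) =>
  (forall j, F (f j)) /\ c`_i = \sum_(j < size Y) f j * Y`_j) (n := size B)
  (fun i _ => lin_combP (lspan_lin_comb (subf0 hF) (proj1 (leaf2_lspan _) (hc i)))).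
pose l' i j := if (i < size B)%N then l i j else 0.
have hl' i j : F (l' i j).
  by rewrite /l'; case: ifP => h; [case: (hl i h) | apply: subf0].
have E : \sum_(i < size B) (\sum_(j < size Y) l' i j * Y`_j) * B`_i = 0.
  rewrite -[RHS]e; apply: eq_bigr => i _; rewrite /l' ltn_ord.
  by case: (hl i (ltn_ord i)) => _ ->.
have l'0 := lin_indep_tower hF (pow_image_subfield hp) FP BP B_indep Y_indep hl' E.
move=> i hi; case: (hl i hi) => _ ->; apply: big1 => j _.
by have := l'0 i j hi (ltn_ord j); rewrite /l' hi => ->; rewrite mul0r.
Qed.

Lemma leaf2_basis : is_basis leaf2 W1 (frobs p Z).
Proof.
split; [by move=> u /BP [v ->] | exact: lin_indep_leaf2_frobs | move=> x /y_span hx].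
apply: lspan_lin_comb; first exact: subf0 leaf2_subfield.
apply: (lspan_mono (A := lspan F (monomials p y))); first by move=> u /leaf2_lspan.
apply: lspan_prodseq_swap hx => // _ [u ->].
exact: lspan_frob (Z_span u).
Qed.

End Basis.
End Foliation.

Theorem mainTheorem12 (K : fieldType) (p : nat) (W1 : K -> Prop) :
  p \in [pchar K] ->
  fin_gen_over (perfect_core (K:=K) p) ->
  is_subfield W1 ->
  subset_of (pow_image (K:=K) p) W1 ->
  (exists x : K, ~ W1 x) ->
  exists W2 : K -> Prop,
    [/\ is_subfield W2,
        subset_of W2 W1,
        subset_of (pow_image (K:=K) (p ^ 2)) W2,
        (forall x, compositum W2 (pow_image (K:=K) p) x <-> W1 x) &
        same_deg W2 W1 W1 (fun _ => True)].
Proof.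
move=> hp [s hs] hW1 hPW1 _.
have hP := pow_image_subfield hp.
have Ppow (x : K) : pow_image p (x ^+ p) by exists x.
have W1pow (x : K) : W1 (x ^+ p) by apply: hPW1.
have gen_s L : subset_of (pow_image p) L -> forall x, gen_field (fun y => L y \/ y \in s) x.
  move=> hPL x; apply: gen_field_mono (hs x) => y [hy|]; last by right.
  by left; apply: hPL; move: (hy 1%N); rewrite expn1.
have [z [_ z_free z_span]] :=
  p_basis hp hW1 (@subfieldT K) (fun _ _ => I) W1pow (fun _ _ => I) (fun x _ => gen_s W1 hPW1 x).
have [t [_ _ t_span]] :=
  p_basis hp hP (@subfieldT K) (fun _ _ => I) Ppow (fun _ _ => I) (fun x _ => gen_s _ (fun _ h => h) x).
have [Z' eZ] := monomials_head hp z; rewrite eZ in z_free z_span.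
have [g [gW1 g_span]] := intermediate_finite_span hP hW1 hPW1 z_free
  (fun x => proj1 (z_span x) I) (fun x => proj1 (t_span x) I).
have [y [yW1 y_free y_span]] := p_basis hp hP hW1 hPW1 Ppow gW1
  (fun x hx => lspan_sub (gen_field_subfield _) (fun u hu => sub_gen_field (or_introl hu))
                 (fun u hu => sub_gen_field (or_intror hu)) (g_span x hx)).
have z_basis : is_basis W1 (fun _ => True) (1 :: Z').
  by apply: lfree_basis => // [|x _]; [apply: subf0 | apply/z_span].
exists (leaf2 p W1 y); split.
- exact: leaf2_subfield.
- exact: leaf2_sub.
- exact: pow_image_leaf2.
- exact: compositum_leaf2.
move=> n; have W2_basis := leaf2_basis hp hW1 W1pow yW1 y_free y_span z_free (fun x => proj1 (z_span x) I).
by rewrite (ext_deg_basis _ (leaf2_subfield hp hW1 yW1) W2_basis) (ext_deg_basis _ hW1 z_basis) size_map.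
Qed.
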